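(* Let $m<n$, let $\mathbf{p}=(p_1,\ldots,p_n)$ be a probability vector with $p_1\geq\cdots\geq p_n\geq 0$, and let $\mathbf{q}=(q_1,\ldots,q_m)$ be a probability vector with $q_1\geq\cdots\geq q_m\geq 0$. If $\mathbf{p}\preceq\mathbf{q}$, then $R_m(\mathbf{p})\preceq\mathbf{q}$.
   Context: Majorization: for probability vectors $\mathbf{a},\mathbf{b}$, each sorted in nonincreasing order, with the shorter one padded with zeros to equal length, $\mathbf{a}\preceq\mathbf{b}$ means $\sum_{k=1}^i a_k\leq\sum_{k=1}^i b_k$ for all $i$. Definition of $R_m(\mathbf{p})=(r_1,\ldots,r_m)$: if $p_1<1/m$, then $R_m(\mathbf{p})=(1/m,\ldots,1/m)$. If $p_1\geq 1/m$, let $i^*$ be the maximum index $i\in\{1,\ldots,m-1\}$ with $p_i\geq \frac{\sum_{j=i+1}^n p_j}{m-i}$. Then $r_i=p_i$ for $i\leq i^*$ and $r_i=\frac{\sum_{j=i^*+1}^n p_j}{m-i^*}$ for $i=i^*+1,\ldots,m$. *)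

From HB Require Import structures.
From mathcomp Require Import all_boot all_order all_algebra.
Set Implicit Arguments. Unset Strict Implicit. Unset Printing Implicit Defensive.
Import Order.TTheory GRing.Theory Num.Theory.
Local Open Scope ring_scope.

Definition prob_vec (R : realFieldType) (a : seq R) : Prop :=
  all (fun x => 0 <= x) a /\ \sum_(x <- a) x = 1.

Definition nonincr (R : realFieldType) (a : seq R) : bool := sorted >=%R a.

(* majorization a ⪯ b: sort both nonincreasingly; for every i, the sum of the
   first i entries of a is <= that of b.  (take i on a shorter list takes the
   whole list, which is the same as padding with zeros.) *)
Definition majorized (R : realFieldType) (a b : seq R) : Prop :=
  forall i : nat,
    \sum_(x <- take i (sort >=%R a)) x <= \sum_(x <- take i (sort >=%R b)) x.

(* tail sum  p_{i+1} + ... + p_n  (1-based), i.e. sum of drop i p *)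
Definition tailsum (R : realFieldType) (p : seq R) (i : nat) : R :=
  \sum_(x <- drop i p) x.

(* the condition p_i >= (sum_{j>i} p_j)/(m-i), with 1-based index i *)
Definition istar_cond (R : realFieldType) (m : nat) (p : seq R) (i : nat) : bool :=
  tailsum p i / (m - i)%:R <= p`_i.-1.

(* i* = max i in {1,...,m-1} satisfying the condition (0 if there is none) *)
Definition istar (R : realFieldType) (m : nat) (p : seq R) : nat :=
  (\max_(1 <= i < m | istar_cond m p i) i)%N.

Definition Rm (R : realFieldType) (m : nat) (p : seq R) : seq R :=
  if (p`_0 < 1 / m%:R) || (istar m p == 0)%N then nseq m (1 / m%:R)
  else take (istar m p) p ++
       nseq (m - istar m p) (tailsum p (istar m p) / (m - istar m p)%:R).

From HB Require Import structures.
From mathcomp Require Import all_boot all_order all_algebra.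
From mathcomp Require Import ring lra.
Set Implicit Arguments. Unset Strict Implicit. Unset Printing Implicit Defensive.
Import Order.TTheory GRing.Theory Num.Theory.
Local Open Scope ring_scope.

(* Writing k for the number of entries R_m(p) keeps (0 or i^* ), R_m(p) is the
   prefix p_1..p_k followed by m - k copies of the mean r of the tail mass.
   Up to position k the prefix sums of R_m(p) and p coincide.  Beyond k, the
   prefix sums of R_m(p) grow linearly in the position, while those of the
   nonincreasing q are concave: the mean of q_{k+1}..q_j is at least the mean
   of q_{k+1}..q_m.  Since the two prefix sums are ordered at k and equal at m,
   the linear one stays below the concave one in between. *)

Lemma sorted_nseq (T : Type) (r : rel T) (x : T) n : r x x -> sorted r (nseq n x).
Proof. by move=> rxx; elim: n => [|[|n] IH] //=; rewrite rxx. Qed.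

Section SortedSums.
Variable R : realFieldType.
Implicit Types (xs ys u : seq R) (c : R).

Lemma sum_le_mulrn c ys : all (fun y => y <= c) ys -> \sum_(y <- ys) y <= c *+ size ys.
Proof.
elim: ys => [|y ys IH] /=; first by rewrite big_nil.
by case/andP=> yc /IH ysc; rewrite big_cons mulrS lerD.
Qed.

Lemma allrel_ge_sum xs ys : allrel >=%R xs ys ->
  (\sum_(y <- ys) y) *+ size xs <= (\sum_(x <- xs) x) *+ size ys.
Proof.
elim: xs => [|x xs IH] /=; first by rewrite big_nil mul0rn.
rewrite allrel_consl => /andP[xys /IH le_xs_ys].
by rewrite big_cons mulrS mulrnDl lerD // sum_le_mulrn.
Qed.

Lemma sorted_mean_take u j : sorted >=%R u -> (j <= size u)%N ->
  (\sum_(x <- u) x) *+ j <= (\sum_(x <- take j u) x) *+ size u.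
Proof.
move=> u_sorted j_le.
have /allrel_ge_sum : allrel >=%R (take j u) (drop j u).
  move: u_sorted; rewrite -{1}(cat_take_drop j u) sorted_pairwise.
    by rewrite pairwise_cat => /and3P[].
  exact: ge_trans.
rewrite size_take_min size_drop (minn_idPl j_le) => le_drop_take.
rewrite -{1}(cat_take_drop j u) big_cat /= mulrnDl.
by rewrite -(subnKC j_le) mulrnDr lerD2l.
Qed.

Lemma sum_nseq n c : \sum_(x <- nseq n c) x = c *+ n.
Proof. by rewrite big_nseq iter_addr_0. Qed.

End SortedSums.

Section SpreadTail.
Variables (R : realFieldType) (m k : nat).
Implicit Types p q : seq R.

Definition spread_tail p : seq R :=
  take k p ++ nseq (m - k) (tailsum p k / (m - k)%:R).

Lemma size_spread_tail p : (k <= size p)%N -> (k <= m)%N -> size (spread_tail p) = m.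
Proof. by move=> kp km; rewrite size_cat size_take_min (minn_idPl kp) size_nseq subnKC. Qed.

Lemma sorted_spread_tail p : sorted >=%R p -> (k <= size p)%N ->
  ((0 < k)%N -> istar_cond m p k) -> sorted >=%R (spread_tail p).
Proof.
move=> p_sorted kp cond; rewrite sorted_pairwise ?pairwise_cat; last exact: ge_trans.
apply/and3P; split; last first.
- by rewrite -sorted_pairwise; [apply: sorted_nseq; exact: lexx | exact: ge_trans].
- by rewrite -sorted_pairwise ?take_sorted //; exact: ge_trans.
apply/allrelP => x y /(nthP 0)[i]; rewrite size_take_min (minn_idPl kp) => ik <-.
rewrite mem_nseq => /andP[_ /eqP->]; rewrite nth_take //.
have k_gt0 : (0 < k)%N := leq_ltn_trans (leq0n i) ik.
apply: le_trans (cond k_gt0) _.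
apply: (sorted_leq_nth ge_trans lexx 0 p_sorted); rewrite ?inE.
- exact: leq_trans ik kp.
- by rewrite prednK.
- by rewrite -ltnS prednK.
Qed.

Lemma take_spread_tail_le i p : (i <= k)%N -> (k <= size p)%N ->
  take i (spread_tail p) = take i p.
Proof. by move=> ik kp; rewrite takel_cat ?take_takel // size_take_min (minn_idPl kp). Qed.

Lemma sum_take_spread_tail i p : (k <= i <= m)%N -> (k <= size p)%N ->
  \sum_(x <- take i (spread_tail p)) x =
  \sum_(x <- take k p) x + (tailsum p k / (m - k)%:R) *+ (i - k).
Proof.
move=> /andP[ki im] kp.
rewrite take_cat size_take_min (minn_idPl kp) ltnNge ki /= take_nseq ?leq_sub2r //.
by rewrite big_cat sum_nseq.
Qed.

Lemma spread_tail_prefix_le p q :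
  sorted >=%R q -> size q = m -> (k < m)%N -> (k <= size p)%N ->
  \sum_(x <- p) x = \sum_(x <- q) x ->
  (forall i, \sum_(x <- take i p) x <= \sum_(x <- take i q) x) ->
  forall i, \sum_(x <- take i (spread_tail p)) x <= \sum_(x <- take i q) x.
Proof.
move=> q_sorted q_size km kp sum_pq dom i.
have [ik|ki] := leqP i k; first by rewrite take_spread_tail_le.
wlog im : i ki / (i <= m)%N.
  move=> mid; have [|mi] := leqP i m; first exact: mid.
  have := mid m km (leqnn m).
  by rewrite !take_oversize ?size_spread_tail ?q_size ?(ltnW mi) ?(ltnW km).
rewrite sum_take_spread_tail ?(ltnW ki) ?im //.
have -> : take i q = take k q ++ take (i - k) (drop k q) by rewrite -takeD subnKC // ltnW.
rewrite big_cat /= -mulr_natr.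
set s := (m - k)%:R; set j := (i - k)%:R; set r := tailsum p k / s.
set P := \sum_(x <- take k p) x; set Q := \sum_(x <- take k q) x.
set U := \sum_(x <- drop k q) x; set T := \sum_(x <- take (i - k) _) x.
have s_gt0 : 0 < s by rewrite ltr0n subn_gt0.
have r_s : r * s = Q + U - P.
  have sum_p : P + tailsum p k = \sum_(x <- p) x by rewrite /tailsum -big_cat cat_take_drop.
  have sum_q : Q + U = \sum_(x <- q) x by rewrite -big_cat cat_take_drop.
  by rewrite divfK ?gt_eqF // sum_q -sum_pq -sum_p addrC addKr.
have mean_u : U * j <= T * s.
  rewrite !mulr_natr -q_size -size_drop.
  by apply: sorted_mean_take; rewrite ?drop_sorted // size_drop q_size leq_sub2r.
have PQ : (Q - P) * j <= (Q - P) * s.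
  by rewrite ler_wpM2l ?subr_ge0 ?dom // ler_nat leq_sub2r.
rewrite -(ler_pM2r s_gt0).
have -> : (P + r * j) * s = P * s + (r * s) * j by ring.
rewrite r_s; lra.
Qed.

End SpreadTail.

Lemma prob_vec_size_gt0 (R : realFieldType) (a : seq R) : prob_vec a -> (0 < size a)%N.
Proof.
case: a => [|//] [_]; rewrite big_nil => /eqP.
by rewrite eq_sym oner_eq0.
Qed.

Lemma majorized_sorted (R : realFieldType) (a b : seq R) : nonincr a -> nonincr b ->
  majorized a b <-> forall i, \sum_(x <- take i a) x <= \sum_(x <- take i b) x.
Proof. by move=> a_sorted b_sorted; rewrite /majorized !sorted_sort //; exact: ge_trans. Qed.

Section Rm.
Variables (R : realFieldType) (m : nat) (p : seq R).

Lemma istarP : istar m p = 0%N \/ istar_cond m p (istar m p) /\ (istar m p < m)%N.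
Proof.
rewrite /istar big_seq_cond.
apply: (big_ind (fun i => i = 0%N \/ istar_cond m p i /\ (i < m)%N)); first by left.
- by move=> i j ? ?; rewrite /maxn; case: ifP.
- by move=> i /andP[]; rewrite mem_index_iota => /andP[_ im] cond_i; right.
Qed.

Definition Rm_cut : nat :=
  if (p`_0 < 1 / m%:R) || (istar m p == 0)%N then 0 else istar m p.

Lemma Rm_cut_lt : (0 < m)%N -> (Rm_cut < m)%N.
Proof.
rewrite /Rm_cut; case: ifP => // /norP[_ /eqP istar_neq0] _.
by case: istarP => [//|[]].
Qed.

Lemma Rm_cut_cond : (0 < Rm_cut)%N -> istar_cond m p Rm_cut.
Proof.
rewrite /Rm_cut; case: ifP => // /norP[_ /eqP istar_neq0] _.
by case: istarP => [//|[]].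
Qed.

Lemma Rm_spread_tail : \sum_(x <- p) x = 1 -> Rm m p = spread_tail m Rm_cut p.
Proof.
rewrite /Rm /spread_tail /Rm_cut; case: ifP => // _ p_sum.
by rewrite take0 cat0s subn0 /tailsum drop0 p_sum.
Qed.

End Rm.

Theorem lemma4 (R : realFieldType) (m n : nat) (p q : seq R) :
  (m < n)%N ->
  size p = n -> prob_vec p -> nonincr p ->
  size q = m -> prob_vec q -> nonincr q ->
  majorized p q ->
  majorized (Rm m p) q.
Proof.
move=> mn p_size p_prob p_sorted q_size q_prob q_sorted.
have m_gt0 : (0 < m)%N by rewrite -q_size prob_vec_size_gt0.
have cut_lt : (Rm_cut m p < m)%N by exact: Rm_cut_lt.
have cut_le_size : (Rm_cut m p <= size p)%N by rewrite p_size ltnW // (ltn_trans cut_lt).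
have [[_ p_sum] [_ q_sum]] := (p_prob, q_prob).
rewrite Rm_spread_tail // !majorized_sorted //; last exact/sorted_spread_tail/Rm_cut_cond.
by apply: spread_tail_prefix_le; rewrite // p_sum q_sum.
Qed.
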